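(* For any collection $\mathcal X$ of arcs of the $\infty$-gon, the collection $\mathsf{nc}\,\mathcal X$ is a Ptolemy diagram.
   Context: An arc of the $\infty$-gon is a pair $(i,j)$ of integers with $j-i\ge 2$. Two arcs $(i,j),(k,l)$ cross if $i<k<j<l$ or $k<i<l<j$. For a collection $\mathcal X$ of arcs, $\mathsf{nc}\,\mathcal X$ denotes the set of all arcs that cross no arc of $\mathcal X$. A Ptolemy diagram of the $\infty$-gon is a collection $\mathcal X$ of arcs such that whenever $(i,j),(r,s)\in\mathcal X$ cross with $i<r$, each of the pairs $(i,r),(i,s),(r,j),(j,s)$ which is an arc (i.e. whose entries differ by at least $2$) lies in $\mathcal X$. *)

From Stdlib Require Import ZArith.
Open Scope Z_scope.

(* An arc of the infinity-gon: a pair (i,j) of integers with j - i >= 2. *)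
Definition is_arc (a : Z * Z) : Prop := fst a + 2 <= snd a.

Definition collection (X : Z * Z -> Prop) : Prop := forall a, X a -> is_arc a.

Definition cross (a b : Z * Z) : Prop :=
  let (i, j) := a in let (k, l) := b in
  (i < k /\ k < j /\ j < l) \/ (k < i /\ i < l /\ l < j).

Definition nc (X : Z * Z -> Prop) : Z * Z -> Prop :=
  fun a => is_arc a /\ forall b, X b -> ~ cross a b.

Definition ptolemy (X : Z * Z -> Prop) : Prop :=
  collection X /\
  forall i j r s, X (i, j) -> X (r, s) -> cross (i, j) (r, s) -> i < r ->
    (is_arc (i, r) -> X (i, r)) /\ (is_arc (i, s) -> X (i, s)) /\
    (is_arc (r, j) -> X (r, j)) /\ (is_arc (j, s) -> X (j, s)).

From Stdlib Require Import ZArith Lia.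

(* If two arcs (i,j) and (r,s) cross with i < r, their endpoints are in
   cyclic order i < r < j < s and span a quadrilateral.  The key geometric
   fact is that any arc crossing a side or a diagonal of this quadrilateral,
   i.e. an arc (p,q) whose endpoints are both corners, already crosses one
   of the two diagonals (i,j) or (r,s).  Consequently an arc "dominated" in
   this sense by two arcs of nc X crosses nothing in X either, so all sides
   of the quadrilateral that are arcs lie in nc X: this is the Ptolemy
   condition.  Note that the result holds for an arbitrary predicate X. *)

Lemma nc_collection (X : Z * Z -> Prop) : collection (nc X).
Proof. intros a [Ha _]; exact Ha. Qed.

Lemma cross_interleave (i j r s : Z) :
  cross (i, j) (r, s) -> i < r -> r < j /\ j < s.
Proof. unfold cross; lia. Qed.

Definition corner (i r j s p : Z) : Prop := p = i \/ p = r \/ p = j \/ p = s.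

Lemma cross_corner_segment (i r j s p q : Z) (b : Z * Z) :
  i < r -> r < j -> j < s -> corner i r j s p -> corner i r j s q ->
  cross (p, q) b -> cross (i, j) b \/ cross (r, s) b.
Proof. destruct b as [k l]; unfold corner, cross; lia. Qed.

Lemma nc_dominated (X : Z * Z -> Prop) (a a1 a2 : Z * Z) :
  is_arc a -> nc X a1 -> nc X a2 ->
  (forall b, cross a b -> cross a1 b \/ cross a2 b) -> nc X a.
Proof.
  intros Ha [_ N1] [_ N2] Hdom; split; [exact Ha |].
  intros b Hb Hab; destruct (Hdom b Hab) as [H1 | H2].
  - exact (N1 b Hb H1).
  - exact (N2 b Hb H2).
Qed.

Lemma nc_corner_arc (X : Z * Z -> Prop) (i j r s p q : Z) :
  nc X (i, j) -> nc X (r, s) -> cross (i, j) (r, s) -> i < r ->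
  corner i r j s p -> corner i r j s q -> is_arc (p, q) -> nc X (p, q).
Proof.
  intros Hij Hrs Hc Hir Hp Hq Hpq.
  destruct (cross_interleave i j r s Hc Hir) as [Hrj Hjs].
  apply (nc_dominated X (p, q) (i, j) (r, s) Hpq Hij Hrs).
  intro b; exact (cross_corner_segment i r j s p q b Hir Hrj Hjs Hp Hq).
Qed.

Theorem mainTheorem2 (X : Z * Z -> Prop) (hX : collection X) : ptolemy (nc X).
Proof.
  split; [exact (nc_collection X) |].
  intros i j r s Hij Hrs Hc Hir.
  assert (Hcorner : forall p q, corner i r j s p -> corner i r j s q ->
                    is_arc (p, q) -> nc X (p, q))
    by (intros p q; exact (nc_corner_arc X i j r s p q Hij Hrs Hc Hir)).
  unfold corner in Hcorner.
  repeat split; apply Hcorner; tauto.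
Qed.
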